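(* Let $\kappa,\gamma\in\mathbb{N}^n$ and let $T:\mathbb{C}_\kappa[z_1,\ldots,z_n]\to\mathbb{C}_\gamma[z_1,\ldots,z_n]$ be a linear operator. Then the symbol of the polarization of $T$ is the polarization of the symbol of $T$, that is, $G_{\Pi(T)}=\Pi^\uparrow_{\gamma\oplus\kappa}(G_T)$.
   Context: $\mathbb{C}_\kappa[z_1,\ldots,z_n]$: polynomials of degree at most $\kappa_i$ in $z_i$. $\mathbb{C}_{MA}^\kappa$: multi-affine polynomials in variables $z_{ij}$, $1\le i\le n$, $1\le j\le\kappa_i$. Polarization $\Pi_\kappa^\uparrow:\mathbb{C}_\kappa[z]\to\mathbb{C}_{MA}^\kappa$ is linear with $\Pi_\kappa^\uparrow(z^\alpha)=\binom{\kappa}{\alpha}^{-1}\prod_{i}E_{\alpha_i}(z_{i1},\ldots,z_{i\kappa_i})$ ($E_k$ the $k$-th elementary symmetric polynomial, $\binom{\kappa}{\alpha}=\prod\binom{\kappa_i}{\alpha_i}$); the projection $\Pi_\kappa^\downarrow:\mathbb{C}_{MA}^\kappa\to\mathbb{C}_\kappa[z]$ substitutes $z_{ij}\mapsto z_i$. The polarization of $T$ is $\Pi(T)=\Pi_\gamma^\uparrow\circ T\circ\Pi_\kappa^\downarrow:\mathbb{C}_{MA}^\kappa\to\mathbb{C}_{MA}^\gamma$. The symbol of $T$ is $G_T(z,w)=T[(z+w)^\kappa]=\sum_{\alpha\le\kappa}\binom{\kappa}{\alpha}T(z^\alpha)w^{\kappa-\alpha}\in\mathbb{C}_{\gamma\oplus\kappa}[z_1,\ldots,z_n,w_1,\ldots,w_n]$,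 with $\gamma\oplus\kappa=(\gamma_1,\ldots,\gamma_n,\kappa_1,\ldots,\kappa_n)$; the symbol of the operator $\Pi(T)$ on multi-affine polynomials is $G_{\Pi(T)}=\Pi(T)\big[\prod_{i=1}^n\prod_{j=1}^{\kappa_i}(z_{ij}+w_{ij})\big]$ ($\Pi(T)$ acting on the $z_{ij}$ variables). $\Pi^\uparrow_{\gamma\oplus\kappa}$ polarizes each $z_i$ into $z_{i1},\ldots,z_{i\gamma_i}$ and each $w_i$ into $w_{i1},\ldots,w_{i\kappa_i}$. *)

From mathcomp Require Import all_boot all_algebra.
From mathcomp Require Import Rstruct.
From mathcomp Require Import complex.
From mathcomp Require Export mpoly.

Set Implicit Arguments.
Unset Strict Implicit.
Unset Printing Implicit Defensive.
Import GRing.Theory.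
Local Open Scope ring_scope.

Definition C : fieldType := complex Rdefinitions.R.

Notation mpolyV F V := {mpoly F[#|V|]}.

Definition sumV (U W : finType) : finType := (U + W)%type.

Section Polarization.
Variable F : fieldType.

Definition var (V : finType) (v : V) : mpolyV F V := 'X_(enum_rank v).

Definition expo (V : finType) (m : 'X_{1..#|V|}) (v : V) : nat := m (enum_rank v).

Definition deg_bounded (V : finType) (k : V -> nat) (p : mpolyV F V) : Prop :=
  forall m, m \in msupp p -> forall v, (expo m v <= k v)%N.

Definition rename (U V : finType) (f : U -> V) (p : mpolyV F U) : mpolyV F V :=
  p \mPo [tuple var (f (enum_val i)) | i < #|U|].

(* the polarized variables z_(i j), 1 <= j <= k i  (j is 0-based here) *)
Definition polvar (I : finType) (k : I -> nat) : finType := {i : I & 'I_(k i)}.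

Definition Epol (I : finType) (k : I -> nat) (i : I) (e : nat) : mpolyV F (polvar k) :=
  \sum_(S : {set 'I_(k i)} | #|S| == e) \prod_(j in S) var (existT (fun i => 'I_(k i)) i j).

Definition binomv (I : finType) (k a : I -> nat) : nat := \prod_(i : I) 'C(k i, a i).

Definition polup (I : finType) (k : I -> nat) (p : mpolyV F I) : mpolyV F (polvar k) :=
  \sum_(m <- msupp p)
     p@_m *: (((binomv k (expo m))%:R)^-1 *: \prod_(i : I) Epol k i (expo m i)).

Definition poldown (I : finType) (k : I -> nat) (q : mpolyV F (polvar k)) : mpolyV F I :=
  rename (fun v : polvar k => projT1 v) q.

Definition polT (I : finType) (k g : I -> nat) (T : mpolyV F I -> mpolyV F I)
  (q : mpolyV F (polvar k)) : mpolyV F (polvar g) :=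
  polup g (T (@poldown I k q)).

(* L acting on the z-variables of a polynomial P in variables z (indexed by U)
   and w (indexed by W), coefficient-wise (linearly) in the w-variables. *)
Definition actz (U U' W : finType) (L : mpolyV F U -> mpolyV F U')
  (P : mpolyV F (sumV U W)) : mpolyV F (sumV U' W) :=
  \sum_(m <- msupp P)
     P@_m *: (rename (@inl U' W) (L (\prod_(u : U) var u ^+ expo m (inl u)))
              * \prod_(w : W) var (@inr U' W w) ^+ expo m (inr w)).

(* symbol of T : F_k[z] -> F_g[z]:  G_T(z,w) = T[(z+w)^k]  (z = inl, w = inr) *)
Definition symbol (I : finType) (k : I -> nat) (T : mpolyV F I -> mpolyV F I)
  : mpolyV F (sumV I I) :=
  actz T (\prod_(i : I) (var (@inl I I i) + var (@inr I I i)) ^+ k i).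

Definition symbolMA (U U' : finType) (L : mpolyV F U -> mpolyV F U')
  : mpolyV F (sumV U' U) :=
  actz L (\prod_(u : U) (var (@inl U U u) + var (@inr U U u))).

End Polarization.

Definition oplus (I : finType) (g k : I -> nat) (s : (sumV I I)) : nat :=
  match s with inl i => g i | inr i => k i end.

(* canonical identification of the variables z_(i j) (j < g i), w_(i j) (j < k i)
   with the polarized variables of the (z,w)-space for the degree vector g (+) k *)
Definition ident (I : finType) (g k : I -> nat)
  (s : sumV (polvar g) (polvar k)) : polvar (oplus g k) :=
  match s with
  | inl (existT i j) => existT (fun s => 'I_(oplus g k s)) (inl i) j
  | inr (existT i j) => existT (fun s => 'I_(oplus g k s)) (inr i) j
  end.

From HB Require Import structures.
From mathcomp Require Import all_boot all_algebra.
From mathcomp Require Import mpoly.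
From mathcomp Require Import Rstruct complex.
Set Implicit Arguments.
Unset Strict Implicit.
Unset Printing Implicit Defensive.
Import GRing.Theory Num.Theory.
Local Open Scope ring_scope.

(* Expanding [prod_(i,j) (z_ij + w_ij)] over the subsets S of the polarized
   variables, the left-hand side becomes [sum_S Pi(T)(z_S) w_(~S)], where
   [Pi(T)(z_S)] depends on S only through its multidegree [setdeg S].  Expanding
   [(z + w)^kappa] in the same way and polarizing, the right-hand side becomes
   [sum_S binom(kappa, deg ~S)^-1 Pi(T)(z_S) prod_i E_(deg ~S)(w_i)].  Expanding
   the elementary symmetric polynomials, each [w_S'] then occurs once for every S
   with [deg ~S = deg S'], that is [binom(kappa, deg S')] times, which cancels the
   normalizing factor. *)

Section LinearExtension.
Variables (F : fieldType) (N : nat) (M : lmodType F).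
Implicit Types (f : 'X_{1..N} -> M) (p : {mpoly F[N]}).

Definition mlin f p : M := \sum_(m <- msupp p) p@_m *: f m.

Lemma mlin_seqE f p (s : seq 'X_{1..N}) : uniq s -> {subset msupp p <= s} ->
  mlin f p = \sum_(m <- s) p@_m *: f m.
Proof.
move=> s_uniq supp_s; rewrite (bigID (mem (msupp p))) /=.
rewrite [X in _ + X]big1 ?addr0 => [|m /memN_msupp_eq0 ->]; last by rewrite scale0r.
rewrite -big_filter; apply/perm_big/uniq_perm; rewrite ?filter_uniq ?msupp_uniq //.
by move=> m; rewrite mem_filter andb_idr //; apply: supp_s.
Qed.

Lemma mlin_is_linear f : linear (mlin f).
Proof.
move=> c p q; pose s := undup (msupp p ++ msupp q ++ msupp (c *: p + q)).
have mlin_s r : {subset msupp r <= s} -> mlin f r = \sum_(m <- s) r@_m *: f m.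
  exact/mlin_seqE/undup_uniq.
rewrite !mlin_s; first rewrite scaler_sumr -big_split /=.
  by apply: eq_bigr => m _; rewrite mcoeffD mcoeffZ scalerDl scalerA.
all: by move=> m m_in; rewrite mem_undup !mem_cat m_in ?orbT.
Qed.

HB.instance Definition _ f :=
  GRing.isLinear.Build F {mpoly F[N]} M _ (mlin f) (mlin_is_linear f).

Lemma mlinX f m : mlin f 'X_[m] = f m.
Proof. by rewrite /mlin msuppX big_seq1 mcoeffX eqxx scale1r. Qed.

End LinearExtension.

Section NamedVariables.
Variables (F : fieldType) (V : finType).

Definition mnm_of (e : V -> nat) : 'X_{1..#|V|} := [multinom e (enum_val i) | i < #|V|].

Lemma expo_mnm_of e v : expo (mnm_of e) v = e v.
Proof. by rewrite /expo mnmE enum_rankK. Qed.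

Lemma mpolyX_varE (m : 'X_{1..#|V|}) :
  'X_[m] = \prod_(v : V) var F v ^+ expo m v.
Proof.
rewrite mpolyXE_id (reindex (@enum_rank V)) //.
by exists enum_val => v _; rewrite ?enum_rankK ?enum_valK.
Qed.

Lemma prod_var_exp (e : V -> nat) :
  \prod_(v : V) var F v ^+ e v = 'X_[mnm_of e].
Proof. by rewrite mpolyX_varE; apply: eq_bigr => v _; rewrite expo_mnm_of. Qed.

End NamedVariables.

Section Rename.
Variables (F : fieldType) (U V : finType) (h : U -> V).
Implicit Types (p q : mpolyV F U).

Lemma rename_var u : rename h (var F u) = var F (h u).
Proof. by rewrite /rename /var comp_mpolyXU -tnth_nth tnth_mktuple enum_rankK. Qed.

Lemma renameZ c p : rename h (c *: p) = c *: rename h p.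
Proof. exact: comp_mpolyZ. Qed.

Lemma renameM p q : rename h (p * q) = rename h p * rename h q.
Proof. exact: rmorphM. Qed.

Lemma renameX p e : rename h (p ^+ e) = rename h p ^+ e.
Proof. exact: rmorphXn. Qed.

Lemma rename_sum (J : Type) (r : seq J) (P : pred J) (G : J -> mpolyV F U) :
  rename h (\sum_(j <- r | P j) G j) = \sum_(j <- r | P j) rename h (G j).
Proof. exact: raddf_sum. Qed.

Lemma rename_prod (J : Type) (r : seq J) (P : pred J) (G : J -> mpolyV F U) :
  rename h (\prod_(j <- r | P j) G j) = \prod_(j <- r | P j) rename h (G j).
Proof. exact: rmorph_prod. Qed.

Lemma rename_prod_var_exp (J : finType) (x : J -> U) (e : J -> nat) :
  rename h (\prod_j var F (x j) ^+ e j) = \prod_j var F (h (x j)) ^+ e j.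
Proof. by rewrite rename_prod; apply: eq_bigr => j _; rewrite renameX rename_var. Qed.

End Rename.

Lemma rename_comp (F : fieldType) (U V W : finType) (h : U -> V) (h' : V -> W)
  (p : mpolyV F U) :
  rename h' (rename h p) = rename (h' \o h) p.
Proof.
(* The inner [rename] must be expanded first: the outer one would otherwise match
   by unfolding the inner [rename] into a sum. *)
rewrite [p]mpolyE [rename h _]rename_sum !rename_sum; apply: eq_bigr => m _.
rewrite !renameZ mpolyX_varE !rename_prod; congr (_ *: _); apply: eq_bigr => u _.
by rewrite !renameX !rename_var.
Qed.

Section SplitMonomials.
Variables (F : fieldType) (U W : finType).

Definition join_exp (a : U -> nat) (b : W -> nat) (s : sumV U W) : nat :=
  match s with inl u => a u | inr w => b w end.

Lemma mpolyX_join (m : 'X_{1..#|U|}) (b : W -> nat) :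
  rename (@inl U W) 'X_[m] * \prod_(w : W) var F (inr w) ^+ b w
  = 'X_[mnm_of (join_exp (expo m) b)].
Proof.
by rewrite -prod_var_exp big_sumType mpolyX_varE rename_prod_var_exp.
Qed.

End SplitMonomials.

Section ZAction.
Variables (F : fieldType) (U U' W : finType).

Definition actz_term (L : mpolyV F U -> mpolyV F U') (m : 'X_{1..#|sumV U W|})
  : mpolyV F (sumV U' W) :=
  rename inl (L (\prod_(u : U) var F u ^+ expo m (inl u)))
    * \prod_(w : W) var F (inr w) ^+ expo m (inr w).

(* By definition [actz L] is the linear extension of [actz_term L], and likewise
   [polup k] below is that of [polup_term k]. *)
HB.instance Definition _ L := GRing.Linear.copy (@actz F U U' W L) (mlin (actz_term L)).

Lemma actz_split (L : {linear mpolyV F U -> mpolyV F U'}) p (b : W -> nat) :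
  actz L (rename inl p * \prod_(w : W) var F (inr w) ^+ b w)
  = rename inl (L p) * \prod_(w : W) var F (inr w) ^+ b w.
Proof.
rewrite [p]mpolyE rename_sum (linear_sum L) rename_sum !mulr_suml linear_sum.
apply: eq_bigr => m _.
rewrite !linearZ /= renameZ -!scalerAl mpolyX_join linearZ /= renameZ -scalerAl; congr (_ *: _).
rewrite [LHS]mlinX /actz_term; congr (rename _ (L _) * _).
- by rewrite mpolyX_varE; apply: eq_bigr => u _; rewrite expo_mnm_of.
- by apply: eq_bigr => w _; rewrite expo_mnm_of.
Qed.

End ZAction.

Definition polup_term (F : fieldType) (J : finType) (k : J -> nat) (m : 'X_{1..#|J|})
  : mpolyV F (polvar k) :=
  (binomv k (expo m))%:R^-1 *: \prod_(i : J) Epol F k i (expo m i).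

HB.instance Definition _ (F : fieldType) (J : finType) (k : J -> nat) :=
  GRing.Linear.copy (@polup F J k) (mlin (polup_term F k)).

Lemma polupX (F : fieldType) (J : finType) (k : J -> nat) (m : 'X_{1..#|J|}) :
  polup k 'X_[m] = polup_term F k m.
Proof. exact: mlinX. Qed.

Section PolarizationOfSplitPolynomials.
Variables (F : fieldType) (I : finType) (g k : I -> nat).

Lemma rename_Epol_inl i e :
  rename (@ident I g k \o inl) (Epol F g i e) = Epol F (oplus g k) (inl i) e.
Proof.
rewrite /Epol rename_sum; apply: eq_bigr => A _.
by rewrite rename_prod; apply: eq_bigr => j _; rewrite rename_var.
Qed.

Lemma polup_split (q : mpolyV F I) (b : I -> nat) :
  polup (oplus g k) (rename inl q * \prod_(i : I) var F (inr i) ^+ b i)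
  = (binomv k b)%:R^-1 *: (rename (@ident I g k \o inl) (polup g q)
                             * \prod_(i : I) Epol F (oplus g k) (inr i) (b i)).
Proof.
rewrite [q]mpolyE rename_sum mulr_suml !linear_sum rename_sum mulr_suml scaler_sumr.
apply: eq_bigr => m _.
rewrite renameZ -scalerAl mpolyX_join !linearZ /= renameZ -scalerAl.
rewrite [RHS]scalerA mulrC -scalerA; congr (_ *: _).
rewrite !polupX /polup_term renameZ -scalerAl scalerA rename_prod.
rewrite /binomv big_sumType /= natrM invfM mulrC big_sumType /=.
by congr (((_)%:R^-1 / (_)%:R) *: (_ * _)); apply: eq_bigr => i _;
  rewrite expo_mnm_of ?rename_Epol_inl.
Qed.
End PolarizationOfSplitPolynomials.

Lemma prodD_subsets (R : comPzSemiRingType) (U : finType) (a b : U -> R) :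
  \prod_u (a u + b u) = \sum_(S : {set U}) (\prod_(u in S) a u) * \prod_(u in ~: S) b u.
Proof.
rewrite bigA_distr; apply: eq_bigr => S _.
by rewrite (bigID (mem S)) /=; congr (_ * _); apply: eq_big => [u|u Su];
  rewrite ?inE ?Su ?(negbTE Su).
Qed.

Lemma prod_set_exp (R : comPzSemiRingType) (U : finType) (A : {set U}) (b : U -> R) :
  \prod_(u in A) b u = \prod_u b u ^+ (u \in A).
Proof. by rewrite big_mkcond; apply: eq_bigr => u _; case: (u \in A). Qed.

Section PolarizedSubsets.
Variables (I : finType) (k : I -> nat).
Local Notation K := (polvar k).
Implicit Types (S : {set K}).

Definition fiber S (i : I) : {set 'I_(k i)} := [set j | existT (fun i => 'I_(k i)) i j \in S].

Definition setdeg S (i : I) : nat := #|fiber S i|.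

Lemma setdeg_le S i : (setdeg S i <= k i)%N.
Proof. by rewrite -[k i]card_ord max_card. Qed.

Lemma setdegC S i : setdeg (~: S) i = (k i - setdeg S i)%N.
Proof.
rewrite /setdeg.
have -> : fiber (~: S) i = ~: fiber S i by apply/setP => j; rewrite !inE.
by rewrite cardsCs setCK card_ord.
Qed.

Lemma big_fiber (R : comPzSemiRingType) S (G : K -> R) :
  \prod_(u in S) G u = \prod_i \prod_(j in fiber S i) G (existT _ i j).
Proof.
have untag_existT (T : Type) (x : T) i (f : 'I_(k i) -> T) j :
    untag x f (existT (fun i => 'I_(k i)) i j) = f j.
  exact: (@untagE _ (fun i => 'I_(k i)) _ x i f (existT _ i j) (erefl i)).
rewrite (partition_big (fun u : K => projT1 u) predT) //=; apply: eq_bigr => i _.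
rewrite (big_tag_cond (fun i => [pred j | j \in fiber S i]) (fun i j => G (existT _ i j)) i).
apply: eq_big => -[i' j] /=; have [<-|ne] := eqVneq i' i.
- by rewrite untag_existT /= andbT !inE eqxx.
- by rewrite andbF inE /= (negbTE ne).
- by rewrite untag_existT.
- by rewrite andbF.
Qed.

Lemma prod_proj (R : comPzSemiRingType) S (x : I -> R) :
  \prod_(u in S) x (projT1 u) = \prod_i x i ^+ setdeg S i.
Proof. by rewrite big_fiber; apply: eq_bigr => i _ /=; rewrite prodr_const. Qed.

Lemma setdegT i : setdeg [set: K] i = k i.
Proof.
by rewrite /setdeg (_ : fiber _ i = setT) ?cardsT ?card_ord //; apply/setP => j; rewrite !inE.
Qed.

Lemma prod_proj_all (R : comPzSemiRingType) (x : I -> R) :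
  \prod_(u : K) x (projT1 u) = \prod_i x i ^+ k i.
Proof.
transitivity (\prod_i x i ^+ setdeg [set: K] i).
  by rewrite -prod_proj; apply: eq_bigl => u; rewrite inE.
by apply: eq_bigr => i _; rewrite setdegT.
Qed.

Lemma sum_prod_fibers (R : comPzSemiRingType) (G : forall i, {set 'I_(k i)} -> R) :
  \sum_S \prod_i G i (fiber S i) = \prod_i \sum_(A : {set 'I_(k i)}) G i A.
Proof.
pose T_ i := ({set 'I_(k i)} : finType).
pose P_ i := [ffun A : T_ i => G i A].
transitivity (\prod_i \sum_(A : T_ i) P_ i A); last first.
  by apply: eq_bigr => i _; apply: eq_bigr => A _; rewrite ffunE.
under [RHS]eq_bigr => i _ do rewrite (big_tag (fun i (A : T_ i) => P_ i A)).
rewrite bigA_distr_big_dep -big_fprod.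
rewrite (reindex (fun S => fprod_of_fun (fun i => fiber S i : T_ i))).
  by apply: eq_bigr => S _; apply: eq_bigr => i _; rewrite fprodE ffunE.
apply: onW_bij; exists (fun t : fprod T_ => [set u : K | projT2 u \in t (projT1 u)]).
  by move=> S; apply/setP => -[i j]; rewrite inE fprodE inE.
by move=> t; apply/fprodP => i; rewrite fprodE; apply/setP => j; rewrite !inE.
Qed.

Lemma sum_setdeg (R : comPzSemiRingType) (e : I -> nat) (w : K -> R) :
  \sum_(S | [forall i, setdeg S i == e i]) \prod_(u in S) w u
  = \prod_i \sum_(A : {set 'I_(k i)} | #|A| == e i) \prod_(j in A) w (existT _ i j).
Proof.
under [RHS]eq_bigr => i _ do rewrite big_mkcond /=.
rewrite -sum_prod_fibers big_mkcond /=; apply: eq_bigr => S _.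
rewrite big_fiber; case: forallP => [deg_e | deg_ne].
  by apply: eq_bigr => i _; rewrite [_ == _]deg_e.
have [i /negbTE ne_i] : exists i, setdeg S i != e i.
  by apply/existsP; rewrite -negb_forall; apply/forallP.
by rewrite (bigD1 i) //= [_ == _]ne_i mul0r.
Qed.

Lemma card_setdeg (e : I -> nat) :
  #|[set S | [forall i, setdeg S i == e i]]| = binomv k e.
Proof.
rewrite -sum1_card (eq_bigl (fun S => [forall i, setdeg S i == e i])) => [|S]; last first.
  by rewrite inE.
rewrite (eq_bigr (fun S => \prod_(u in S) 1%N)) => [|S _]; last by rewrite big1.
rewrite sum_setdeg; apply: eq_bigr => i _.
rewrite -[in RHS](card_ord (k i)) -card_draws -sum1_card big_mkcond [RHS]big_mkcond /=.
by apply: eq_bigr => A _; rewrite inE big1_eq.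
Qed.

Lemma card_setdegC (e : I -> nat) :
  #|[set S | [forall i, setdeg (~: S) i == e i]]| = binomv k e.
Proof.
rewrite -card_setdeg -(card_imset _ (@setC_inj K)); apply: eq_card => S.
by rewrite -[S in LHS]setCK mem_imset ?inE ?setCK //; apply: setC_inj.
Qed.

End PolarizedSubsets.

Lemma polT_is_linear (F : fieldType) (I : finType) (k g : I -> nat)
    (T : {linear mpolyV F I -> mpolyV F I}) :
  linear (@polT F I k g T).
Proof. by move=> c p q; rewrite /polT /poldown /rename !linearP. Qed.

HB.instance Definition _ (F : fieldType) (I : finType) (k g : I -> nat)
    (T : {linear mpolyV F I -> mpolyV F I}) :=
  GRing.isLinear.Build F _ _ _ (@polT F I k g T) (@polT_is_linear F I k g T).

Section SymbolOfPolarization.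
Variables (F : fieldType) (I : finType) (g k : I -> nat).
Variable T : {linear mpolyV F I -> mpolyV F I}.
Local Notation K := (polvar k).
Local Notation w u := (var F (@ident I g k (inr u))).

Definition zpart (S : {set K}) : mpolyV F (polvar (oplus g k)) :=
  rename (@ident I g k \o inl) (polup g (T (\prod_i var F i ^+ setdeg S i))).

Lemma symbolMA_polT_expand :
  rename (@ident I g k) (symbolMA (@polT F I k g T))
  = \sum_(S : {set K}) zpart S * \prod_(u in ~: S) w u.
Proof.
rewrite /symbolMA prodD_subsets linear_sum rename_sum; apply: eq_bigr => S _; rewrite [LHS]/=.
rewrite (_ : \prod_(u in S) _ = rename inl (\prod_(u in S) var F u)); last first.
  by rewrite rename_prod; apply: eq_bigr => u _; rewrite rename_var.
rewrite (prod_set_exp (~: S)) actz_split renameM rename_comp rename_prod_var_exp.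
rewrite -prod_set_exp; congr (_ * _); rewrite /= /polT /poldown rename_prod.
rewrite (eq_bigr (fun u : K => var F (projT1 u))) => [|u _]; last exact: rename_var.
by rewrite prod_proj.
Qed.

Lemma polup_symbol_expand :
  polup (oplus g k) (symbol k T)
  = \sum_(S : {set K}) (binomv k (setdeg (~: S)))%:R^-1 *:
      (zpart S * \prod_i Epol F (oplus g k) (inr i) (setdeg (~: S) i)).
Proof.
rewrite /symbol (_ : \prod_i _ = \prod_(u : K) (var F (inl (projT1 u)) + var F (inr (projT1 u)))).
  rewrite prodD_subsets [actz _ _]linear_sum linear_sum; apply: eq_bigr => S _ /=.
  rewrite (prod_proj _ (fun i => var F (inr i))).
  rewrite (_ : \prod_(u in S) _ = rename inl (\prod_(u in S) var F (projT1 u))).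
    by rewrite actz_split polup_split prod_proj.
  by rewrite rename_prod; apply: eq_bigr => u _; rewrite rename_var.
by rewrite (prod_proj_all _ (fun i => var F (inl i) + var F (inr i))).
Qed.

Lemma prod_Epol_inr (e : I -> nat) :
  \prod_i Epol F (oplus g k) (inr i) (e i)
  = \sum_(S | [forall i, setdeg S i == e i]) \prod_(u in S) w u.
Proof. by rewrite sum_setdeg. Qed.

Lemma zpart_setdegC (S S' : {set K}) :
  [forall i, setdeg (~: S) i == setdeg S' i] -> zpart S = zpart (~: S').
Proof.
move=> /forallP deg_S; rewrite /zpart; congr (rename _ (polup _ (T _))).
apply: eq_bigr => i _; congr (_ ^+ _).
by rewrite [RHS]setdegC -(eqP (deg_S i)) setdegC subKn ?setdeg_le.
Qed.

Hypothesis pcharF0 : [pchar F] =i pred0.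

Lemma binomv_setdeg_neq0 (S : {set K}) : (binomv k (setdeg S))%:R != 0 :> F.
Proof.
rewrite (pcharf0P _).1 // -lt0n.
by apply: prodn_gt0 => i; rewrite bin_gt0 setdeg_le.
Qed.

Lemma symbol_polT :
  rename (@ident I g k) (symbolMA (@polT F I k g T)) = polup (oplus g k) (symbol k T).
Proof.
rewrite symbolMA_polT_expand polup_symbol_expand (reindex_inj (@setC_inj K)).
under [RHS]eq_bigr => S _ do rewrite prod_Epol_inr mulr_sumr scaler_sumr.
rewrite (exchange_big_dep xpredT) //; apply: eq_bigr => S' _; rewrite setCK.
pose c := (binomv k (setdeg S'))%:R^-1 : F.
transitivity (\sum_(S in [set S : {set K} | [forall i, setdeg (~: S) i == setdeg S' i]])
                c *: (zpart (~: S') * \prod_(u in S') w u)).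
  rewrite -scaler_suml sumr_const card_setdegC -mulr_natr mulVf ?scale1r //.
  exact: binomv_setdeg_neq0.
apply: eq_big => [S | S]; rewrite inE.
  by apply: eq_forallb => i; rewrite eq_sym.
move=> deg_S; rewrite (zpart_setdegC deg_S) /c /binomv.
by congr (_%:R^-1 *: _); apply: eq_bigr => i _; rewrite (eqP (forallP deg_S i)).
Qed.

End SymbolOfPolarization.

Theorem lemma2p5 (n : nat) (kappa gamma : 'I_n -> nat)
  (T : {linear mpolyV C 'I_n -> mpolyV C 'I_n})
  (hT : forall p, deg_bounded kappa p -> deg_bounded gamma (T p)) :
  @rename C _ _ (@ident 'I_n gamma kappa)
     (@symbolMA C (polvar kappa) (polvar gamma) (@polT C 'I_n kappa gamma T))
  = @polup C _ (oplus gamma kappa) (@symbol C 'I_n kappa T).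
Proof.
exact/symbol_polT/pchar_num.
Qed.
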